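(* Let $Q$ be a finite quiver, $R\subseteq\mathbb{C}Q_{\ge1}$ a finite-dimensional $\mathbb{C}Q_0$-sub-bimodule of bounded type, $(B,\mathfrak{m})$ a deformation base, $\psi:R\to\mathfrak{m}\mathbb{C}Q$ a $\mathbb{C}Q_0$-bimodule map and $P=(\mathrm{Id}+\psi)(R)$. If $I(P)$ is quasi-flat, then $I(P)_{\mathbb{C}Q}$ is quasi-flat, i.e. $I(P)_{\mathbb{C}Q}\cap\mathfrak{m}\mathbb{C}Q\subseteq\mathfrak{m}I(P)_{\mathbb{C}Q}$.
   Context: Deformation base: complete local Noetherian unital $\mathbb{C}$-algebra $B$ with maximal ideal $\mathfrak{m}$, $B/\mathfrak{m}=\mathbb{C}$; $B\widehat{\otimes}X=\varprojlim(B/\mathfrak{m}^k\otimes X)$; for a subspace $Y\subseteq B\widehat{\otimes}X$, $\mathfrak{m}Y=\{\sum_im_iy_i:y_i\in Y,m_i\in\mathfrak{m}^{k_i},k_i\ge1,k_i\to\infty\}$, and $\mathfrak{m}X$ is the image of $\mathfrak{m}\widehat{\otimes}X$. $\widehat{\mathbb{C}Q}$ is the completed path algebra. $(P)=\{\sum_{i\ge0}p_i(r_i+\psi(r_i))q_i: r_i\in R,p_i,q_i\text{ paths},|p_i|+|q_i|\to\infty\}\subseteq B\widehat{\otimes}\widehat{\mathbb{C}Q}$; $I(P)=\{\sum_jb_jy_j:y_j\in(P),b_j\in\mathfrak{m}^{k_j},k_j\to\infty\}$; $I(P)$ is quasi-flat if $I(P)\cap\mathfrak{m}\widehat{\mathbb{C}Q}\subseteq\mathfrak{m}I(P)$.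 $I(P)_{\mathbb{C}Q}=\{\sum_ib_ip_i(r_i+\psi(r_i))q_i:b_i\in\mathfrak{m}^{k_i},k_i\to\infty,r_i\in R,p_i,q_i\text{ paths}\}\subseteq B\widehat{\otimes}\mathbb{C}Q$. Bounded type: $R$ has a basis $F$ (each element in some $e_v\mathbb{C}Qe_w$) such that, with $\sim$ the equivalence relation on paths generated by $pc_iq\sim pc_jq$ whenever $c_i,c_j$ are paths with nonzero coefficient in the same $c\in F$, $h(N)=\sup\{|q|:\exists p,|p|\le N,p\sim q\}<\infty$ for all $N$. *)

From HB Require Import structures.
From mathcomp Require Import all_boot all_order all_algebra.
From mathcomp Require Import complex Rstruct.
From Stdlib Require Import Relation_Operators.

Set Implicit Arguments. Unset Strict Implicit. Unset Printing Implicit Defensive.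
Import Order.TTheory GRing.Theory Num.Theory.
Local Open Scope ring_scope.

Notation CC := (complex Rdefinitions.R).

Record quiver := Quiver {
  Q0 : finType;
  Q1 : finType;
  qsrc : Q1 -> Q0;
  qtgt : Q1 -> Q0 }.

Section Paths.
Variable Q : quiver.

(* chain u s v : the arrows s compose into a path from u to v
   (left-to-right convention: the path a1 a2 ... an first follows a1). *)
Fixpoint chain (u : Q0 Q) (s : seq (Q1 Q)) (v : Q0 Q) : bool :=
  match s with
  | [::] => u == v
  | a :: s' => (qsrc a == u) && chain (qtgt a) s' v
  end.

Definition rawpath := (Q0 Q * Q0 Q * seq (Q1 Q))%type.
(* A path: (start, end, arrows); trivial paths e_v are (v, v, [::]). *)
Definition qpath := {x : rawpath | chain x.1.1 x.2 x.1.2}.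

Definition pstart (p : qpath) : Q0 Q := (val p).1.1.
Definition pend (p : qpath) : Q0 Q := (val p).1.2.
Definition parrows (p : qpath) : seq (Q1 Q) := (val p).2.
Definition plen (p : qpath) : nat := size (parrows p).

Definition is_concat (p c q w : qpath) : bool :=
  [&& parrows w == parrows p ++ parrows c ++ parrows q,
      pstart w == pstart p, pend w == pend q,
      pend p == pstart c & pend c == pstart q].

(* the (unique, if any) c such that w = p c q *)
Definition middle (p q w : qpath) : option qpath :=
  match @insub rawpath _ _
     ((pend p, pstart q,
       take (plen w - plen p - plen q) (drop (plen p) (parrows w))) : rawpath)
  with
  | Some c => if is_concat p c q w then Some c else None
  | None => None
  end.

Section Coeffs.
Variable K : nmodType.
(* Elements of K ^ (paths) : (possibly infinite) K-combinations of paths. *)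
Definition sandwich (p q : qpath) (x : qpath -> K) : qpath -> K :=
  fun w => if middle p q w is Some c then x c else 0.
(* x |-> e_v x e_w *)
Definition eproj (v w : Q0 Q) (x : qpath -> K) : qpath -> K :=
  fun u => if (pstart u == v) && (pend u == w) then x u else 0.
End Coeffs.

(* Elements of the path algebra CQ: finitely supported functions. *)
Definition in_CQ (r : qpath -> CC) : Prop :=
  exists s : seq qpath, forall w, r w != 0 -> w \in s.
Definition in_CQge1 (r : qpath -> CC) : Prop :=
  in_CQ r /\ forall w, plen w = 0%N -> r w = 0.
End Paths.

Section Base.
Variables (B : comAlgType CC) (m : B -> Prop).

Fixpoint mpow (k : nat) : B -> Prop :=
  match k with
  | 0 => fun _ => True
  | k'.+1 => fun x => exists s : seq (B * B),
       (forall ab, ab \in s -> m ab.1 /\ mpow k' ab.2) /\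
       x = \sum_(ab <- s) ab.1 * ab.2
  end.

Definition converges (u : nat -> B) (l : B) : Prop :=
  forall k, exists N, forall n, (N <= n)%N -> mpow k (l - u n).
Definition cauchy (u : nat -> B) : Prop :=
  forall k, exists N, forall n n', (N <= n)%N -> (N <= n')%N -> mpow k (u n - u n').

Definition is_ideal (I : B -> Prop) : Prop :=
  [/\ I 0, forall x y, I x -> I y -> I (x + y) & forall a x, I x -> I (a * x)].
Definition fin_gen (I : B -> Prop) : Prop :=
  exists s : seq B, forall x, I x <-> exists a : nat -> B,
      x = \sum_(i < size s) a i * s`_i.

(* (B, m) is a complete local Noetherian C-algebra with maximal ideal m
   and B/m = C. *)
Definition deformation_base : Prop :=
  is_ideal m /\ ~ m 1 /\
  (forall x, ~ m x -> exists y, x * y = 1) /\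
  (* B/m = C *)
  (forall b, exists c : CC, m (b - c%:A)) /\
  (forall I, is_ideal I -> fin_gen I) /\
  (forall b, (forall k, mpow k b) -> b = 0) /\
  (forall u, cauchy u -> exists l, converges u l).

Definition tends_infty (k : nat -> nat) : Prop :=
  forall N, exists M, forall i, (M <= i)%N -> (N <= k i)%N.

Section Spaces.
Variable Q : quiver.
(* B \hat\otimes \hat{CQ} is modelled by qpath -> B (all functions);
   B \hat\otimes CQ is the subspace of functions x such that, for every k,
   x w lies in m^k for all but finitely many paths w. *)
Definition in_BCQ (x : qpath Q -> B) : Prop :=
  forall k, exists s : seq (qpath Q), forall w, ~ mpow k (x w) -> w \in s.
Definition in_mCQhat (x : qpath Q -> B) : Prop := forall w, m (x w).
Definition in_mCQ (x : qpath Q -> B) : Prop := in_BCQ x /\ in_mCQhat x.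

Definition sum_to (t : nat -> qpath Q -> B) (z : qpath Q -> B) : Prop :=
  forall w, converges (fun n => \sum_(i < n) t i w) (z w).

Definition mY (Y : (qpath Q -> B) -> Prop) (z : qpath Q -> B) : Prop :=
  exists (b : nat -> B) (k : nat -> nat) (y : nat -> qpath Q -> B),
    (forall i, (1 <= k i)%N /\ mpow (k i) (b i) /\ Y (y i)) /\
    tends_infty k /\ sum_to (fun i w => b i * y i w) z.

Variables (R : (qpath Q -> CC) -> Prop) (psi : (qpath Q -> CC) -> (qpath Q -> B)).

Definition idpsi (r : qpath Q -> CC) : qpath Q -> B :=
  fun w => (r w)%:A + psi r w.

(* (P): sums \sum_i p_i (r_i + psi r_i) q_i over a finite or infinite family
   (None = no term) with |p_i| + |q_i| -> oo. *)
Definition in_Pgen (z : qpath Q -> B) : Prop :=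
  exists t : nat -> option (qpath Q * (qpath Q -> CC) * qpath Q),
    (forall i, if t i is Some (p, r, q) then R r else True) /\
    (forall N, exists M, forall i, (M <= i)%N ->
        match t i with Some (p, r, q) => is_true (N <= plen p + plen q)%N | None => True end) /\
    sum_to (fun i => if t i is Some (p, r, q) then sandwich p q (idpsi r)
                     else fun _ => 0) z.

Definition in_IP (z : qpath Q -> B) : Prop :=
  exists (b : nat -> B) (k : nat -> nat) (y : nat -> qpath Q -> B),
    (forall j, mpow (k j) (b j) /\ in_Pgen (y j)) /\
    tends_infty k /\ sum_to (fun j w => b j * y j w) z.

Definition in_IP_CQ (z : qpath Q -> B) : Prop :=
  exists (b : nat -> B) (k : nat -> nat)
         (t : nat -> option (qpath Q * (qpath Q -> CC) * qpath Q)),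
    (forall i, mpow (k i) (b i) /\
               if t i is Some (p, r, q) then R r else True) /\
    tends_infty k /\
    sum_to (fun i w => if t i is Some (p, r, q)
                       then b i * sandwich p q (idpsi r) w else 0) z.

Definition bimodule_map_to_mCQ : Prop :=
  (forall r s, R r -> R s ->
     psi (fun w => r w + s w) = (fun w => psi r w + psi s w)) /\
  (forall (c : CC) r, R r -> psi (fun w => c * r w) = (fun w => c *: psi r w)) /\
  (forall v v' r, R r -> psi (eproj v v' r) = eproj v v' (psi r)) /\
  (forall r, R r -> in_mCQ (psi r)).
End Spaces.
End Base.

Section RConds.
Variables (Q : quiver) (R : (qpath Q -> CC) -> Prop).

Definition fun0 : qpath Q -> CC := fun _ => 0.

Definition sub_bimodule_CQge1 : Prop :=
  (forall r, R r -> in_CQge1 r) /\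
  R fun0 /\
  (forall r s, R r -> R s -> R (fun w => r w + s w)) /\
  (forall (c : CC) r, R r -> R (fun w => c * r w)) /\
  (forall v v' r, R r -> R (eproj v v' r)).

Definition lincomb (F : seq (qpath Q -> CC)) (a : nat -> CC) : qpath Q -> CC :=
  fun w => \sum_(i < size F) a i * nth fun0 F i w.

Definition is_basis (F : seq (qpath Q -> CC)) : Prop :=
  (forall i, (i < size F)%N -> R (nth fun0 F i)) /\
  (forall a, lincomb F a = fun0 -> forall i, (i < size F)%N -> a i = 0) /\
  (forall r, R r -> exists a, r = lincomb F a).

Definition finite_dimensional : Prop := exists F, is_basis F.

Definition sim_step (F : seq (qpath Q -> CC)) (w1 w2 : qpath Q) : Prop :=
  exists i (p q c1 c2 : qpath Q), (i < size F)%N /\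
    nth fun0 F i c1 != 0 /\ nth fun0 F i c2 != 0 /\
    is_concat p c1 q w1 /\ is_concat p c2 q w2.

Definition sim (F : seq (qpath Q -> CC)) : qpath Q -> qpath Q -> Prop :=
  clos_refl_sym_trans (qpath Q) (sim_step F).

Definition bounded_type : Prop :=
  exists F : seq (qpath Q -> CC),
    is_basis F /\
    (forall i, (i < size F)%N -> exists v v',
        eproj v v' (nth fun0 F i) = nth fun0 F i) /\
    (forall N, exists H, forall p q, (plen p <= N)%N -> sim F p q ->
        (plen q <= H)%N).
End RConds.

(* The element z is built as an m-adic series, block by block.  By quasi-flatness
   of I(P), z lies in m I(P).  Given y in m^K I(P) that is also in B (x) CQ, pick
   a basis e of m^K / m^(K+1) (finite since B is Noetherian) and write
   y = sum_s e_s V_s modulo m^(K+1) I(P) with V_s in (P).  Independence of e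
   forces the residues of the V_s mod m to live on the finitely many paths where
   y is not in m^(K+1), so on paths of length at most some L.  Now split every
   generator p r q of V_s along the basis F of R: basis elements whose ~-classes
   meet a path of length at most L can only occur for |p| + |q| <= h(L) (bounded
   type), so they give a finite sum A_s in I(P)_CQ; the rest has zero residue, so
   it lies in m I(P) by quasi-flatness again.  Hence y = sum_s e_s A_s + y' with
   y' in m^(K+1) I(P), and the blocks e_s A_s, listed one after the other, form
   the series exhibiting z in m I(P)_CQ. *)

From HB Require Import structures.
From mathcomp Require Import all_boot all_order all_algebra.
From mathcomp Require Import complex Rstruct.
From mathcomp Require Import ring.
From Stdlib Require Import Relation_Operators.
From Stdlib Require Import ClassicalEpsilon FunctionalExtensionality Classical.

Set Implicit Arguments. Unset Strict Implicit. Unset Printing Implicit Defensive.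
Import Order.TTheory GRing.Theory Num.Theory.
Local Open Scope ring_scope.

(** * Powers of m and m-adic convergence *)

Section IdealPowers.
Variables (B : comAlgType CC) (m : B -> Prop).
Implicit Types (a x y : B) (k : nat).

Lemma mpow0 k : mpow m k 0.
Proof. by case: k => [|k] //; exists [::]; rewrite big_nil. Qed.

Lemma mpowD k x y : mpow m k x -> mpow m k y -> mpow m k (x + y).
Proof.
case: k => [//|k] [s [Hs ->]] [s' [Hs' ->]].
exists (s ++ s'); split; last by rewrite big_cat.
by move=> ab; rewrite mem_cat => /orP [] h; [apply: Hs | apply: Hs'].
Qed.

Lemma mpowMl k a x : mpow m k x -> mpow m k (a * x).
Proof.
elim: k a x => [//|k IH] a x [s [Hs ->]].
exists [seq (ab.1, a * ab.2) | ab <- s]; split.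
  by move=> ab /mapP [ab' /Hs [h1 h2] ->]; split => //; apply: IH.
by rewrite big_map mulr_sumr; apply: eq_bigr => ab _; rewrite mulrCA.
Qed.

Lemma mpowMr k a x : mpow m k x -> mpow m k (x * a).
Proof. by rewrite mulrC; apply: mpowMl. Qed.

Lemma mpowN k x : mpow m k x -> mpow m k (- x).
Proof. by rewrite -mulN1r; apply: mpowMl. Qed.

Lemma mpowB k x y : mpow m k x -> mpow m k y -> mpow m k (x - y).
Proof. by move=> hx hy; apply: mpowD hx (mpowN hy). Qed.

Lemma mpowZ k (c : CC) x : mpow m k x -> mpow m k (c *: x).
Proof. by rewrite -mulr_algl; apply: mpowMl. Qed.

Lemma mpow_sum k (I : Type) (r : seq I) (P : pred I) (F : I -> B) :
  (forall i, P i -> mpow m k (F i)) -> mpow m k (\sum_(i <- r | P i) F i).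
Proof.
move=> hF; elim/big_rec: _ => [|i x Pi hx]; first exact: mpow0.
exact: mpowD (hF i Pi) hx.
Qed.

Lemma mpowSM k a x : m a -> mpow m k x -> mpow m k.+1 (a * x).
Proof.
by move=> ha hx; exists [:: (a, x)]; rewrite big_seq1; split => // ab /[!inE] /eqP ->.
Qed.

Lemma mpowM k k' x y : mpow m k x -> mpow m k' y -> mpow m (k + k') (x * y).
Proof.
elim: k x => [|k IH] x; first by rewrite add0n => _; apply: mpowMl.
move=> [s [Hs ->]] hy; exists [seq (ab.1, ab.2 * y) | ab <- s]; split.
  by move=> ab /mapP [ab' /Hs [h1 h2] ->]; split => //; apply: IH.
by rewrite big_map mulr_suml; apply: eq_bigr => ab _; rewrite mulrA.
Qed.

Lemma mpowS k x : mpow m k.+1 x -> mpow m k x.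
Proof.
elim: k x => [//|k IH] x [s [Hs ->]]; exists s; split => // ab /Hs [h1 h2].
by split => //; apply: IH.
Qed.

Lemma mpow_le k k' x : (k <= k')%N -> mpow m k' x -> mpow m k x.
Proof.
move=> /subnK <-; elim: (k' - k)%N => [//|n IH] h.
by apply: IH; apply: mpowS; rewrite -addSn.
Qed.

Lemma mpow_is_ideal k : is_ideal (mpow m k).
Proof. by split=> [|x y|a x]; [apply: mpow0 | apply: mpowD | apply: mpowMl]. Qed.

Lemma mpow1 : is_ideal m -> forall x, mpow m 1 x <-> m x.
Proof.
move=> [m0 mD mM] x; split; last by move=> h; rewrite -[x]mulr1; apply: mpowSM.
move=> [s [Hs ->]]; rewrite big_seq; elim/big_rec: _ => [//|ab y /Hs [h _] hy].
by apply: mD hy; rewrite mulrC; apply: mM.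
Qed.


Lemma converges_ev u l N : (forall n, (N <= n)%N -> u n = l) -> converges m u l.
Proof. by move=> h k; exists N => n /h ->; rewrite subrr; apply: mpow0. Qed.

Lemma converges_ext u v l : u =1 v -> converges m u l -> converges m v l.
Proof. by move=> e h k; case: (h k) => N hN; exists N => n; rewrite -e; apply: hN. Qed.

Lemma convergesB u v l l' : converges m u l -> converges m v l' ->
  converges m (fun n => u n - v n) (l - l').
Proof.
move=> h h' k; case: (h k) => N hN; case: (h' k) => N' hN'.
exists (maxn N N') => n; rewrite geq_max => /andP [h1 h2].
have -> : l - l' - (u n - v n) = (l - u n) - (l' - v n) by ring.
by apply: mpowB; [apply: hN | apply: hN'].
Qed.

Lemma convergesMl a u l : converges m u l -> converges m (fun n => a * u n) (a * l).
Proof.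
move=> h k; case: (h k) => N hN; exists N => n hn.
by rewrite -mulrBr; apply/mpowMl/hN.
Qed.

Lemma converges_shift u l N : converges m u l -> converges m (fun n => u (n + N)%N) l.
Proof.
move=> h k; case: (h k) => M hM; exists M => n hn.
by apply: hM; apply: leq_trans hn (leq_addr _ _).
Qed.

Lemma converges_closed k u l : converges m u l -> (forall n, mpow m k (u n)) -> mpow m k l.
Proof.
move=> h hu; case: (h k) => N hN.
by rewrite -(subrK (u N) l); apply: mpowD (hN _ (leqnn N)) (hu N).
Qed.

End IdealPowers.

Section Residue.
Variables (B : comAlgType CC) (m : B -> Prop).
Hypothesis Hdb : deformation_base m.
Implicit Types (b x y : B).

Lemma m_ideal : is_ideal m.
Proof. by case: Hdb. Qed.

Lemma mD x y : m x -> m y -> m (x + y).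
Proof. by move=> /(mpow1 m_ideal) hx /(mpow1 m_ideal) hy; apply/(mpow1 m_ideal)/mpowD. Qed.

Lemma mB x y : m x -> m y -> m (x - y).
Proof. by move=> /(mpow1 m_ideal) hx /(mpow1 m_ideal) hy; apply/(mpow1 m_ideal)/mpowB. Qed.

Definition residue b : CC := epsilon (inhabits 0) (fun c => m (b - c%:A)).

Lemma residueP b : m (b - (residue b)%:A).
Proof. by case: Hdb => _ [_ [_ [hres _]]]; apply: (epsilon_spec _ _ (hres b)). Qed.

Lemma alg_in_m (c : CC) : m c%:A -> c = 0.
Proof.
case: Hdb => [[_ _ mM] [not_m1 _]] hc; have [//|c0] := eqVneq c 0; case: not_m1.
by rewrite -(scale1r (1 : B)) -(mulVf c0) -scalerA -mulr_algl; apply: mM.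
Qed.

Lemma residue_eq b c : m (b - c%:A) -> residue b = c.
Proof.
move=> h; apply/eqP; rewrite -subr_eq0; apply/eqP/alg_in_m.
have -> : (residue b - c)%:A = (b - c%:A) - (b - (residue b)%:A) :> B.
  by rewrite scalerBl; ring.
exact: mB h (residueP b).
Qed.

Lemma residue_eq0 x : (residue x = 0) <-> m x.
Proof.
split; first by move=> h; have := residueP x; rewrite h scale0r subr0.
by move=> h; apply: residue_eq; rewrite scale0r subr0.
Qed.

Lemma residue_alg c : residue c%:A = c.
Proof. by apply: residue_eq; rewrite subrr; case: m_ideal. Qed.

Lemma residueD x y : residue (x + y) = residue x + residue y.
Proof.
apply: residue_eq; have := mD (residueP x) (residueP y).
by rewrite scalerDl opprD addrACA.
Qed.

Lemma residueB x y : residue (x - y) = residue x - residue y.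
Proof.
apply: residue_eq; have := mB (residueP x) (residueP y).
by congr m; rewrite scalerBl; ring.
Qed.

Lemma residue_sum (I : Type) (r : seq I) (P : pred I) (F : I -> B) :
  residue (\sum_(i <- r | P i) F i) = \sum_(i <- r | P i) residue (F i).
Proof.
elim/big_rec2: _ => [|i c x _ <-]; last exact: residueD.
by apply/residue_eq0; case: m_ideal.
Qed.

Lemma converges_residue u l :
  converges m u l -> exists N, forall n, (N <= n)%N -> residue (u n) = residue l.
Proof.
move=> h; case: (h 1%N) => N hN; exists N => n /hN /(mpow1 m_ideal) /residue_eq0.
by rewrite residueB => /eqP; rewrite subr_eq0 => /eqP.
Qed.

End Residue.

Definition interleave (T : Type) (f g : nat -> T) (i : nat) : T :=
  if odd i then g i./2 else f i./2.

Lemma tends_infty_interleave k k' : tends_infty k -> tends_infty k' ->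
  tends_infty (interleave k k').
Proof.
move=> h h' N; case: (h N) => M hM; case: (h' N) => M' hM'.
exists (maxn M M').*2 => i hi; rewrite /interleave; case: ifP => _.
  by apply: hM'; apply: leq_trans (leq_maxr M M') _; rewrite geq_half_double.
by apply: hM; apply: leq_trans (leq_maxl M M') _; rewrite geq_half_double.
Qed.

Lemma tends_infty_shift k N : tends_infty k -> tends_infty (fun i => k (i + N)%N).
Proof.
move=> h L; case: (h L) => M hM; exists M => i hi.
by apply: hM; apply: leq_trans hi (leq_addr _ _).
Qed.

Lemma tends_infty_addl a k : tends_infty k -> tends_infty (fun i => a + k i)%N.
Proof.
move=> h L; case: (h L) => M hM; exists M => i /hM hi.
by apply: leq_trans hi (leq_addl _ _).
Qed.

Lemma tends_infty_id : tends_infty id.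
Proof. by move=> N; exists N. Qed.

Lemma tends_infty_ev k k' M :
  tends_infty k -> (forall i, (M <= i)%N -> k' i = k i) -> tends_infty k'.
Proof.
move=> h e L; case: (h L) => M' hM; exists (maxn M M') => i.
by rewrite geq_max => /andP [h1 h2]; rewrite e //; apply: hM.
Qed.

Lemma tends_infty_single a : tends_infty (fun i => if i == 0%N then a else i).
Proof. by apply: (@tends_infty_ev id _ 1 tends_infty_id) => [[]]. Qed.

Lemma closed_fun_sum (T : Type) (V : nmodType) (P : (T -> V) -> Prop) :
  P (fun _ => 0) -> (forall x y, P x -> P y -> P (fun w => x w + y w)) ->
  forall (I : Type) (r : seq I) (F : I -> T -> V),
    (forall i, P (F i)) -> P (fun w => \sum_(i <- r) F i w).
Proof.
move=> P0 PD I r F PF; elim: r => [|a r IH].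
  by have -> : (fun w => \sum_(i <- [::]) F i w) = (fun _ => 0)
    by apply: functional_extensionality => w; rewrite big_nil.
have -> : (fun w => \sum_(i <- a :: r) F i w) = (fun w => F a w + \sum_(i <- r) F i w).
  by apply: functional_extensionality => w; rewrite big_cons.
exact: PD.
Qed.

Section Series.
Variables (B : comAlgType CC) (m : B -> Prop) (Q : quiver).
Implicit Types (t : nat -> qpath Q -> B) (x y z : qpath Q -> B).

Lemma sum_to_ext t t' z : (forall i, t i =1 t' i) -> sum_to m t z -> sum_to m t' z.
Proof.
by move=> e h w; apply: converges_ext (h w) => n; apply: eq_bigr => i _; rewrite e.
Qed.

Lemma sum_to_eq t z z' : z =1 z' -> sum_to m t z -> sum_to m t z'.
Proof. by move=> e h w; rewrite -e; apply: h. Qed.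

Lemma sum_toB t t' z z' : sum_to m t z -> sum_to m t' z' ->
  sum_to m (fun i w => t i w - t' i w) (fun w => z w - z' w).
Proof. by move=> h h' w; apply: converges_ext (convergesB (h w) (h' w)) => n; rewrite sumrB. Qed.

Lemma sum_toMl (a : qpath Q -> B) t z : sum_to m t z ->
  sum_to m (fun i w => a w * t i w) (fun w => a w * z w).
Proof.
by move=> h w; apply: converges_ext (convergesMl (a w) (h w)) => n; rewrite mulr_sumr.
Qed.

Lemma sum_to_fin t N : (forall i w, (N <= i)%N -> t i w = 0) ->
  sum_to m t (fun w => \sum_(i < N) t i w).
Proof.
move=> h w; apply: (@converges_ev _ m _ _ N) => n hn.
rewrite -(subnKC hn) big_split_ord /= [X in _ + X]big1 ?addr0 // => i _.
by apply: h; rewrite leq_addr.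
Qed.

Lemma sum_to_single x : sum_to m (fun i w => if i == 0%N then x w else 0) x.
Proof. by apply: sum_to_eq (sum_to_fin (N := 1) _) => [w|[|i] w]; rewrite ?big_ord1. Qed.

Lemma sum_to0 : sum_to m (fun _ (_ : qpath Q) => 0) (fun _ => 0).
Proof. by apply: sum_to_eq (sum_to_fin (N := 0) _) => // w; rewrite big_ord0. Qed.

Lemma sum_to_shift t z N : sum_to m t z ->
  sum_to m (fun i => t (i + N)%N) (fun w => z w - \sum_(i < N) t i w).
Proof.
move=> h w; have hN := @converges_ev _ m (fun=> \sum_(i < N) t i w) _ 0 (fun _ _ => erefl).
apply: converges_ext (converges_shift N (convergesB (h w) hN)) => n /=.
rewrite (addnC n N) big_split_ord /= addrAC subrr add0r.
by apply: eq_bigr => i _; rewrite addnC.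
Qed.

Lemma sum_interleave (f g : nat -> B) n :
  \sum_(i < n) interleave f g i = \sum_(i < uphalf n) f i + \sum_(i < n./2) g i.
Proof.
elim: n => [|n IH]; first by rewrite !big_ord0 addr0.
rewrite big_ord_recr /= IH uphalf_half /interleave /=.
case: (odd n); rewrite /= ?add0n ?add1n.
  by rewrite [\sum_(i < n./2.+1) g i]big_ord_recr /=; ring.
by rewrite [\sum_(i < n./2.+1) f i]big_ord_recr /=; ring.
Qed.

Lemma sum_to_interleave t t' z z' : sum_to m t z -> sum_to m t' z' ->
  sum_to m (interleave t t') (fun w => z w + z' w).
Proof.
move=> h h' w k; case: (h w k) => N hN; case: (h' w k) => N' hN'.
exists (maxn N N').*2 => n hn.
have -> : \sum_(i < n) interleave t t' i w = \sum_(i < n) interleave (t^~ w) (t'^~ w) i.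
  by apply: eq_bigr => i _; rewrite /interleave; case: ifP.
rewrite sum_interleave opprD addrACA; apply: mpowD.
  apply: hN; apply: leq_trans (leq_maxl N N') _.
  by rewrite geq_uphalf_double; apply: leq_trans hn _.
by apply: hN'; apply: leq_trans (leq_maxr N N') _; rewrite geq_half_double.
Qed.

Lemma sum_to_mpow k t z : sum_to m t z -> (forall i w, mpow m k (t i w)) ->
  forall w, mpow m k (z w).
Proof.
move=> h ht w; apply: converges_closed (h w) _ => n.
by apply: mpow_sum => i _; apply: ht.
Qed.

Lemma in_BCQ_ext x y : x =1 y -> in_BCQ m x -> in_BCQ m y.
Proof. by move=> /functional_extensionality ->. Qed.

Lemma in_BCQ0 : in_BCQ m (fun _ : qpath Q => 0).
Proof. by move=> k; exists [::] => w []; apply: mpow0. Qed.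

Lemma in_BCQD x y : in_BCQ m x -> in_BCQ m y -> in_BCQ m (fun w => x w + y w).
Proof.
move=> hx hy k; case: (hx k) => s hs; case: (hy k) => s' hs'.
exists (s ++ s') => w h; rewrite mem_cat; apply/orP.
case: (classic (mpow m k (x w))) => h1; last by left; apply: hs.
case: (classic (mpow m k (y w))) => h2; last by right; apply: hs'.
by case: h; apply: mpowD.
Qed.

Lemma in_BCQMl (a : B) x : in_BCQ m x -> in_BCQ m (fun w => a * x w).
Proof. by move=> hx k; case: (hx k) => s hs; exists s => w h; apply: hs => /(mpowMl a). Qed.

Lemma in_BCQB x y : in_BCQ m x -> in_BCQ m y -> in_BCQ m (fun w => x w - y w).
Proof. by move=> hx /(in_BCQMl (-1)) /(in_BCQD hx); apply: in_BCQ_ext => w; rewrite mulN1r. Qed.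

Lemma in_BCQ_sum (I : Type) (r : seq I) (F : I -> qpath Q -> B) :
  (forall i, in_BCQ m (F i)) -> in_BCQ m (fun w => \sum_(i <- r) F i w).
Proof. exact: (@closed_fun_sum _ _ (@in_BCQ _ m Q) in_BCQ0 in_BCQD). Qed.

End Series.

(** * Paths and generators of I(P) *)

Section Sandwich.
Variable Q : quiver.
Implicit Types p q w c : qpath Q.

Lemma middle_concat p q w c : middle p q w = Some c -> is_concat p c q w.
Proof. by rewrite /middle; case: insub => [c0|] //; case: ifP => // h [<-]. Qed.

Lemma concat_inj p c q w w' : is_concat p c q w -> is_concat p c q w' -> w = w'.
Proof.
case/and5P => /eqP h1 /eqP h2 /eqP h3 _ _; case/and5P => /eqP h1' /eqP h2' /eqP h3' _ _.
apply: val_inj; move: h1 h2 h3 h1' h2' h3'; rewrite /parrows /pstart /pend.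
by case: w => [[[a b] s] hw]; case: w' => [[[a' b'] s'] hw'] /= -> -> -> -> -> ->.
Qed.

Lemma middle_inj p q w w' c : middle p q w = Some c -> middle p q w' = Some c -> w = w'.
Proof. by move=> /middle_concat h /middle_concat h'; apply: concat_inj h h'. Qed.

Lemma middle_len p q w c : middle p q w = Some c -> (plen p + plen q <= plen w)%N.
Proof.
case/middle_concat/and5P => /eqP hw _ _ _ _.
by rewrite /plen hw !size_cat addnCA leq_addl.
Qed.

Lemma sandwich_neq0 (K : nmodType) p q (x : qpath Q -> K) w :
  sandwich p q x w != 0 -> exists c, middle p q w = Some c /\ x c != 0.
Proof. by rewrite /sandwich; case: (middle p q w) => [c|]; [exists c | rewrite eqxx]. Qed.

Lemma sandwichD (K : nmodType) p q (x y : qpath Q -> K) w :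
  sandwich p q (fun u => x u + y u) w = sandwich p q x w + sandwich p q y w.
Proof. by rewrite /sandwich; case: (middle p q w); rewrite ?addr0. Qed.

Lemma sandwichMl (K : pzRingType) p q (a : K) (x : qpath Q -> K) w :
  sandwich p q (fun u => a * x u) w = a * sandwich p q x w.
Proof. by rewrite /sandwich; case: (middle p q w); rewrite ?mulr0. Qed.

Lemma in_BCQ_sandwich (B : comAlgType CC) (m : B -> Prop) p q x :
  in_BCQ m x -> in_BCQ m (sandwich p q x).
Proof.
move=> hx k; case: (hx k) => s hs.
pose outer c := epsilon (inhabits None) (fun o => exists w, o = Some w /\ middle p q w = Some c).
exists (pmap outer s) => w; rewrite /sandwich; case e: (middle p q w) => [c|]; last first.
  by case; apply: mpow0.
move=> /hs cs; have : exists o w', o = Some w' /\ middle p q w' = Some c by exists (Some w), w.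
move/(epsilon_spec (inhabits None)) => [w' [e' hw']].
by rewrite mem_pmap; apply/mapP; exists c => //; rewrite /outer e' (middle_inj hw' e).
Qed.

End Sandwich.

Section Generators.
Variables (B : comAlgType CC) (m : B -> Prop).
Hypothesis Hdb : deformation_base m.
Variables (Q : quiver) (R : (qpath Q -> CC) -> Prop) (psi : (qpath Q -> CC) -> qpath Q -> B).
Hypothesis HR : sub_bimodule_CQge1 R.
Hypothesis Hpsi : bimodule_map_to_mCQ m R psi.
Implicit Types (r s : qpath Q -> CC) (x y z : qpath Q -> B).

Local Notation gterm := (option (qpath Q * (qpath Q -> CC) * qpath Q)).

Definition pterm (o : gterm) : qpath Q -> B :=
  if o is Some (p, r, q) then sandwich p q (idpsi psi r) else fun _ => 0.

Definition Rterm (o : gterm) : Prop := if o is Some (_, r, _) then R r else True.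

Definition decays (t : nat -> gterm) : Prop :=
  forall N, exists M, forall i, (M <= i)%N ->
    if t i is Some (p, _, q) then is_true (N <= plen p + plen q)%N else True.

Lemma R0 : R (@fun0 Q).
Proof. by case: HR => _ []. Qed.

Lemma RD r s : R r -> R s -> R (fun w => r w + s w).
Proof. by case: HR => _ [_ [hD _]]; apply: hD. Qed.

Lemma RZ c r : R r -> R (fun w => c * r w).
Proof. by case: HR => _ [_ [_ [hZ _]]]; apply: hZ. Qed.

Lemma psiD r s : R r -> R s -> psi (fun w => r w + s w) = (fun w => psi r w + psi s w).
Proof. by case: Hpsi => hD _; apply: hD. Qed.

Lemma psiZ c r : R r -> psi (fun w => c * r w) = (fun w => c *: psi r w).
Proof. by case: Hpsi => _ [hZ _]; apply: hZ. Qed.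

Lemma psi_mCQ r : R r -> in_mCQ m (psi r).
Proof. by case: Hpsi => _ [_ [_ h]]; apply: h. Qed.

Lemma psi0 w : psi (@fun0 Q) w = 0.
Proof.
have := congr1 (fun f => f w) (psiD R0 R0).
have -> : (fun w => @fun0 Q w + @fun0 Q w) = @fun0 Q.
  by apply: functional_extensionality => u; rewrite /fun0 addr0.
by move=> /= h; apply: (addrI (psi (@fun0 Q) w)); rewrite addr0 -h.
Qed.

Lemma idpsiD r s w : R r -> R s ->
  idpsi psi (fun u => r u + s u) w = idpsi psi r w + idpsi psi s w.
Proof. by move=> hr hs; rewrite /idpsi psiD // scalerDl; ring. Qed.

Lemma idpsiZ c r w : R r -> idpsi psi (fun u => c * r u) w = c%:A * idpsi psi r w.
Proof. by move=> hr; rewrite /idpsi psiZ // mulrDr !mulr_algl scalerA. Qed.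

Lemma idpsi0 w : idpsi psi (@fun0 Q) w = 0.
Proof. by rewrite /idpsi psi0 scale0r addr0. Qed.

Lemma in_BCQ_idpsi r : R r -> in_BCQ m (idpsi psi r).
Proof.
move=> hr k; case: HR => /(_ r hr) [[s hs] _] _; case: (proj1 (psi_mCQ hr) k) => s' hs'.
exists (s ++ s') => w h; rewrite mem_cat; apply/orP.
have [e|/hs] := eqVneq (r w) 0; last by left.
by right; apply: hs' => h'; apply: h; rewrite /idpsi e scale0r add0r.
Qed.

Lemma residue_idpsi r w : R r -> residue m (idpsi psi r w) = r w.
Proof.
move=> hr; rewrite /idpsi (residueD Hdb) (residue_alg Hdb).
by rewrite ((residue_eq0 Hdb _).2 (proj2 (psi_mCQ hr) w)) addr0.
Qed.

Lemma in_BCQ_pterm o : Rterm o -> in_BCQ m (pterm o).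
Proof.
case: o => [[[p r] q]|] /= h; last exact: in_BCQ0.
exact/in_BCQ_sandwich/in_BCQ_idpsi.
Qed.

Lemma residue_pterm o w : Rterm o ->
  residue m (pterm o w) = if o is Some (p, r, q) then sandwich p q r w else 0.
Proof.
have res0 : residue m 0 = 0 by apply/(residue_eq0 Hdb); case: (m_ideal Hdb).
case: o => [[[p r] q]|] //= h; rewrite /sandwich.
by case: (middle p q w) => [c|] //; apply: residue_idpsi.
Qed.

Lemma in_PgenP z : in_Pgen m R psi z <->
  exists t, (forall i, Rterm (t i)) /\ decays t /\ sum_to m (fun i => pterm (t i)) z.
Proof. by []. Qed.

Lemma in_Pgen0 : in_Pgen m R psi (fun _ => 0).
Proof. by exists (fun _ => None); do !split => //; [move=> N; exists 0%N | apply: sum_to0]. Qed.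

Lemma in_PgenD z z' : in_Pgen m R psi z -> in_Pgen m R psi z' ->
  in_Pgen m R psi (fun w => z w + z' w).
Proof.
move=> /in_PgenP [t [Rt [dt st]]] /in_PgenP [t' [Rt' [dt' st']]]; apply/in_PgenP.
exists (interleave t t'); split; first by move=> i; rewrite /interleave; case: ifP.
split; last by apply: sum_to_ext (sum_to_interleave st st') => i w; rewrite /interleave; case: ifP.
move=> N; case: (dt N) => M hM; case: (dt' N) => M' hM'.
exists (maxn M M').*2 => i hi; rewrite /interleave; case: ifP => _.
  by apply: hM'; apply: leq_trans (leq_maxr M M') _; rewrite geq_half_double.
by apply: hM; apply: leq_trans (leq_maxl M M') _; rewrite geq_half_double.
Qed.

Lemma in_PgenZ c z : in_Pgen m R psi z -> in_Pgen m R psi (fun w => c%:A * z w).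
Proof.
move=> /in_PgenP [t [Rt [dt st]]]; apply/in_PgenP.
pose scale o : gterm := if o is Some (p, r, q) then Some (p, fun w => c * r w, q) else None.
exists (fun i => scale (t i)); split.
  by move=> i; move: (Rt i); case: (t i) => [[[p r] q]|] //= /RZ.
split; first by move=> N; case: (dt N) => M hM; exists M => i /hM; case: (t i) => [[[p r] q]|].
apply: sum_to_ext (sum_toMl (fun _ => c%:A) st) => i w.
move: (Rt i); case: (t i) => [[[p r] q]|] //= h; last by rewrite mulr0.
rewrite -sandwichMl /sandwich; case: (middle p q w) => // c'.
by rewrite idpsiZ.
Qed.

Lemma in_Pgen_sum (I : Type) (r : seq I) (F : I -> qpath Q -> B) :
  (forall i, in_Pgen m R psi (F i)) -> in_Pgen m R psi (fun w => \sum_(i <- r) F i w).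
Proof. exact: (@closed_fun_sum _ _ (in_Pgen m R psi) in_Pgen0 in_PgenD). Qed.

Lemma in_Pgen_pterm o : Rterm o -> in_Pgen m R psi (pterm o).
Proof.
move=> ho; apply/in_PgenP; exists (fun i => if i == 0%N then o else None).
split; first by case.
split; first by move=> N; exists 1%N => [[]].
by apply: sum_to_ext (sum_to_single m (pterm o)) => [[]].
Qed.

Lemma in_IP_of_Pgen z : in_Pgen m R psi z -> in_IP m R psi z.
Proof.
move=> hz; exists (fun j => if j == 0%N then 1 else 0), (fun j => if j == 0%N then 0%N else j).
exists (fun _ => z); split; first by case=> [|j]; split => //; apply: mpow0.
split; first exact: tends_infty_single.
by apply: sum_to_ext (sum_to_single m z) => -[|i] w /=; rewrite ?mul1r ?mul0r.
Qed.

Lemma in_IP_of_IP_CQ z : in_IP_CQ m R psi z -> in_IP m R psi z.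
Proof.
move=> [b [k [t [h1 [h2 h3]]]]]; exists b, k, (fun i => pterm (t i)); split.
  by move=> i; case: (h1 i) => hb hr; split => //; apply: in_Pgen_pterm.
by split => //; apply: sum_to_ext h3 => i w; case: (t i) => [[[p r] q]|] /=; rewrite ?mulr0.
Qed.

Lemma in_IP_CQ0 : in_IP_CQ m R psi (fun _ => 0).
Proof.
exists (fun _ => 0), id, (fun _ => None); split; first by split => //; apply: mpow0.
by split; [apply: tends_infty_id | apply: sum_to0].
Qed.

Lemma in_IP_CQ_pterm_sum M (t : nat -> gterm) : (forall i, Rterm (t i)) ->
  in_IP_CQ m R psi (fun w => \sum_(i < M) pterm (t i) w).
Proof.
move=> Rt; exists (fun i => if (i < M)%N then 1 else 0), (fun i => if (i < M)%N then 0%N else i).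
exists (fun i => if (i < M)%N then t i else None); split.
  by move=> i; case: ifP => _; split => //; [apply: Rt | apply: mpow0].
split; first by apply: (@tends_infty_ev id _ M tends_infty_id) => i hi; rewrite ltnNge hi.
pose f i w := if (i < M)%N then pterm (t i) w else 0.
have f0 i w : (M <= i)%N -> f i w = 0 by rewrite /f ltnNge => ->.
apply: sum_to_eq (sum_to_ext _ (sum_to_fin m f0)) => [w|i w].
  by apply: eq_bigr => i _; rewrite /f ltn_ord.
by rewrite /f; case: ifP => _ //; case: (t i) => [[[p r] q]|] /=; rewrite ?mul1r.
Qed.

End Generators.

Section IdealPowerMultiples.
Variables (B : comAlgType CC) (m : B -> Prop).
Hypothesis Hdb : deformation_base m.
Variables (Q : quiver) (R : (qpath Q -> CC) -> Prop) (psi : (qpath Q -> CC) -> qpath Q -> B).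
Hypothesis HR : sub_bimodule_CQge1 R.
Hypothesis Hpsi : bimodule_map_to_mCQ m R psi.
Implicit Types (x y z : qpath Q -> B).

Definition in_mpowIP (K : nat) y : Prop :=
  exists (b : nat -> B) (k : nat -> nat) (Y : nat -> qpath Q -> B),
    (forall i, mpow m K (b i) /\ mpow m (k i) (b i) /\ in_IP m R psi (Y i)) /\
    tends_infty k /\ sum_to m (fun i w => b i * Y i w) y.

Lemma in_mpowIP_ext K y y' : y =1 y' -> in_mpowIP K y -> in_mpowIP K y'.
Proof. by move=> /functional_extensionality ->. Qed.

Lemma in_mpowIP0 K : in_mpowIP K (fun _ => 0).
Proof.
exists (fun _ => 0), id, (fun _ _ => 0); split.
  by move=> i; do !split; [apply: mpow0 | apply: mpow0 | apply/in_IP_of_Pgen/in_Pgen0].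
split; first exact: tends_infty_id.
by apply: sum_to_ext (@sum_to0 _ m Q) => i w; rewrite mulr0.
Qed.

Lemma in_mpowIPD K y y' : in_mpowIP K y -> in_mpowIP K y' ->
  in_mpowIP K (fun w => y w + y' w).
Proof.
move=> [b [k [Y [h1 [h2 h3]]]]] [b' [k' [Y' [h1' [h2' h3']]]]].
exists (interleave b b'), (interleave k k'), (interleave Y Y'); split.
  by move=> i; rewrite /interleave; case: ifP.
split; first exact: tends_infty_interleave.
by apply: sum_to_ext (sum_to_interleave h3 h3') => i w; rewrite /interleave; case: ifP.
Qed.

Lemma in_mpowIP_sum K (I : Type) (r : seq I) (F : I -> qpath Q -> B) :
  (forall i, in_mpowIP K (F i)) -> in_mpowIP K (fun w => \sum_(i <- r) F i w).
Proof. exact: (@closed_fun_sum _ _ (in_mpowIP K) (in_mpowIP0 K) (@in_mpowIPD K)). Qed.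

Lemma in_mpowIPMl a K c y : mpow m a c -> in_mpowIP K y -> in_mpowIP (a + K) (fun w => c * y w).
Proof.
move=> hc [b [k [Y [h1 [h2 h3]]]]].
exists (fun i => c * b i), (fun i => a + k i)%N, Y; split.
  by move=> i; case: (h1 i) => [hb [hk hY]]; split; [|split] => //; apply: mpowM.
split; first exact: tends_infty_addl.
by apply: sum_to_ext (sum_toMl (fun _ => c) h3) => i w; rewrite mulrA.
Qed.

Lemma in_mpowIP_of_IP Y : in_IP m R psi Y -> in_mpowIP 0 Y.
Proof.
move=> hY; exists (fun j => if j == 0%N then 1 else 0), (fun j => if j == 0%N then 0%N else j).
exists (fun _ => Y); split; first by case=> [|j]; do !split => //; apply: mpow0.
split; first exact: tends_infty_single.
by apply: sum_to_ext (sum_to_single m Y) => -[|i] w /=; rewrite ?mul1r ?mul0r.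
Qed.

Lemma in_mpowIP_mpow K y : in_mpowIP K y -> forall w, mpow m K (y w).
Proof.
move=> [b [k [Y [h1 [h2 h3]]]]]; apply: (sum_to_mpow h3) => i w.
by apply: mpowMr; case: (h1 i).
Qed.

Lemma in_mpowIP_of_mY z : mY m (in_IP m R psi) z -> in_mpowIP 1 z.
Proof.
move=> [b [k [Y [h1 [h2 h3]]]]]; exists b, k, Y; split => // i.
by case: (h1 i) => [hk [hb hY]]; split; [apply: mpow_le hb | split].
Qed.

Lemma in_IP_decomp Y : in_IP m R psi Y ->
  exists W V, in_Pgen m R psi W /\ in_mpowIP 1 V /\ forall w, Y w = W w + V w.
Proof.
move=> [b [k [y [h1 [h2 h3]]]]]; case: (h2 1%N) => N hN.
pose c l : B := (residue m (b l))%:A.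
pose W w := \sum_(l < N) c l * y l w.
have hW : in_Pgen m R psi W.
  apply: (@in_Pgen_sum _ _ _ _ _ _ (index_enum 'I_N) (fun l w => c l * y l w)) => l.
  by apply: in_PgenZ => //; case: (h1 l).
exists W, (fun w => Y w - W w); do !split => //; last by move=> w; rewrite addrC subrK.
exists (fun l => if (l < N)%N then b l - c l else b l).
exists (fun l => if (l < N)%N then 1%N else k l), y.
split.
  move=> l; case: (h1 l) => hb /in_IP_of_Pgen hy; case: ifP => hl.
    have h : mpow m 1 (b l - c l) by exact/(mpow1 (m_ideal Hdb))/(residueP Hdb).
    by do !split.
  have hk : (1 <= k l)%N by apply: hN; rewrite leqNgt hl.
  by do !split => //; apply: mpow_le hk hb.
split; first by apply: (tends_infty_ev (M := N) h2) => l hl; rewrite ltnNge hl.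
pose t l w := if (l < N)%N then c l * y l w else 0.
have ht : sum_to m t W.
  have t0 l w : (N <= l)%N -> t l w = 0 by rewrite /t leqNgt => /negbTE ->.
  by apply: sum_to_eq (sum_to_fin m t0) => w; apply: eq_bigr => l _; rewrite /t ltn_ord.
apply: sum_to_ext (sum_toB h3 ht) => l w; rewrite /t.
by case: ifP => _; rewrite ?mulrBl ?subr0.
Qed.

Lemma in_mpowIP_lead K y : in_mpowIP K y ->
  exists N (b : nat -> B) (W : nat -> qpath Q -> B),
    (forall j, mpow m K (b j) /\ in_Pgen m R psi (W j)) /\
    in_mpowIP K.+1 (fun w => y w - \sum_(j < N) b j * W j w).
Proof.
move=> [b [k [Y [h1 [h2 h3]]]]]; case: (h2 K.+1) => N hN.
have /choice [WV hWV] : forall j, exists WV : (qpath Q -> B) * (qpath Q -> B),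
    [/\ in_Pgen m R psi WV.1, in_mpowIP 1 WV.2 & Y j =1 fun w => WV.1 w + WV.2 w].
  move=> j; case: (h1 j) => _ [_ /in_IP_decomp [W [V [hW [hV e]]]]].
  by exists (W, V).
exists N, b, (fun j => (WV j).1); split; first by move=> j; case: (h1 j); case: (hWV j).
have htail : in_mpowIP K.+1 (fun w => y w - \sum_(j < N) b j * Y j w).
  exists (fun i => b (i + N)%N), (fun i => k (i + N)%N), (fun i => Y (i + N)%N).
  split; last by split; [apply: tends_infty_shift | apply: sum_to_shift h3].
  move=> i; case: (h1 (i + N)%N) => hb [hk hY]; do !split => //.
  by apply: mpow_le hk; apply: hN; rewrite leq_addl.
have hV : in_mpowIP K.+1 (fun w => \sum_(j < N) b j * (WV j).2 w).
  apply: (@in_mpowIP_sum _ _ (index_enum 'I_N) (fun j w => b j * (WV j).2 w)) => j.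
  by rewrite -addn1; apply: in_mpowIPMl; [case: (h1 j) | case: (hWV j)].
apply: in_mpowIP_ext (in_mpowIPD htail hV) => w.
have eY j : Y j w = (WV j).1 w + (WV j).2 w by case: (hWV j) => _ _ ->.
have -> : \sum_(j < N) b j * Y j w =
    \sum_(j < N) b j * (WV j).1 w + \sum_(j < N) b j * (WV j).2 w.
  by rewrite -big_split; apply: eq_bigr => j _; rewrite eY mulrDr.
by ring.
Qed.

End IdealPowerMultiples.

(** * Bases of m^K / m^(K+1) *)

Lemma choice_lt (T : Type) (x0 : T) n (P : nat -> T -> Prop) :
  (forall i, (i < n)%N -> exists a, P i a) ->
  exists f : nat -> T, forall i, (i < n)%N -> P i (f i).
Proof.
move=> h; apply: (choice (fun i a => (i < n)%N -> P i a)) => i.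
by case: (ltnP i n) => [/h [a ha]|_]; [exists a | exists x0].
Qed.

Section BasisModPower.
Variables (B : comAlgType CC) (m : B -> Prop).
Hypothesis Hdb : deformation_base m.

Definition comb (e : seq B) (c : nat -> CC) : B := \sum_(s < size e) c s *: e`_s.

Definition indep_mod (K : nat) (e : seq B) : Prop :=
  forall c, mpow m K.+1 (comb e c) -> forall s, (s < size e)%N -> c s = 0.

Lemma comb_cons x e c : comb (x :: e) c = c 0%N *: x + comb e (fun s => c s.+1).
Proof. by rewrite /comb /= big_ord_recl. Qed.

Lemma combZ e k c : comb e (fun s => k * c s) = k *: comb e c.
Proof. by rewrite /comb scaler_sumr; apply: eq_bigr => i _; rewrite scalerA. Qed.

Lemma comb0 e : comb e (fun _ => 0) = 0.
Proof. by rewrite /comb big1 // => i _; rewrite scale0r. Qed.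

Lemma comb_sum e n (r : nat -> CC) (al : nat -> nat -> CC) :
  comb e (fun s => \sum_(i < n) r i * al i s) = \sum_(i < n) r i *: comb e (al i).
Proof.
rewrite /comb; under eq_bigr do rewrite scaler_suml.
rewrite exchange_big /=; apply: eq_bigr => i _; rewrite scaler_sumr.
by apply: eq_bigr => s _; rewrite scalerA.
Qed.

Lemma indep_mod_extract K (g : seq B) : (forall i, (i < size g)%N -> mpow m K g`_i) ->
  exists e : seq B, [/\ forall s, (s < size e)%N -> mpow m K e`_s, indep_mod K e &
    forall i, (i < size g)%N -> exists a, mpow m K.+1 (g`_i - comb e a)].
Proof.
elim: g => [|x g IH] hg; first by exists [::]; split => // c _.
have /IH [e [he hind hsp]] : forall i, (i < size g)%N -> mpow m K g`_i.
  by move=> i hi; apply: (hg i.+1).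
case: (classic (exists a, mpow m K.+1 (x - comb e a))) => hx.
  by exists e; split => // -[|i] hi //; apply: hsp.
exists (x :: e); split.
- by move=> [|s] hs; [apply: (hg 0%N) | apply: he].
- move=> c hc.
  have c0 : c 0%N = 0.
    (* a nonzero leading coefficient would express x modulo m^(K+1) through e *)
    apply/eqP/negPn/negP => c0; case: hx; exists (fun s => - c s.+1 / c 0%N).
    have -> : x - comb e (fun s => - c s.+1 / c 0%N) = (c 0%N)^-1 *: comb (x :: e) c.
      rewrite comb_cons scalerDr scalerA mulVf // scale1r.
      have -> : comb e (fun s => - c s.+1 / c 0%N) = - (c 0%N)^-1 *: comb e (fun s => c s.+1).
        rewrite -combZ; congr comb; apply: functional_extensionality => s.
        by rewrite mulrC mulrN mulNr.
      by rewrite scaleNr opprK.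
    exact: mpowZ.
  move=> [|s] hs //; apply: (hind (fun s => c s.+1)) => //.
  by move: hc; rewrite comb_cons c0 scale0r add0r.
- move=> [|i] hi.
    exists (fun s => if s is 0%N then 1 else 0); rewrite comb_cons /= comb0 scale1r addr0 subrr.
    exact: (mpow0 m K.+1).
  case: (hsp i hi) => a ha; exists (fun s => if s is s'.+1 then a s' else 0).
  by rewrite comb_cons /= scale0r add0r.
Qed.

Lemma basis_mod K : exists e : seq B,
  [/\ forall s, (s < size e)%N -> mpow m K e`_s, indep_mod K e &
      forall b, mpow m K b -> exists c, mpow m K.+1 (b - comb e c)].
Proof.
case: Hdb => _ [_ [_ [_ [Hnoeth _]]]].
case: (Hnoeth _ (mpow_is_ideal m K)) => g hg.
have hgK i : (i < size g)%N -> mpow m K g`_i.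
  move=> hi; apply/hg; exists (fun j => if j == i then 1 else 0).
  rewrite (bigD1 (Ordinal hi)) //= eqxx mul1r big1 ?addr0 // => j hj.
  by rewrite ifN ?mul0r // -(inj_eq val_inj).
case: (indep_mod_extract hgK) => e [he hind hsp].
case: (choice_lt (fun _ => 0) hsp) => al hal.
exists e; split => // b /hg [a ->].
exists (fun s => \sum_(i < size g) residue m (a i) * al i s).
rewrite (comb_sum e (size g) (fun i => residue m (a i)) al) -sumrB; apply: mpow_sum => i _.
have -> : a i * g`_i - residue m (a i) *: comb e (al i) =
    (a i - (residue m (a i))%:A) * g`_i + residue m (a i) *: (g`_i - comb e (al i)).
  by rewrite mulrBl scalerBr mulr_algl; ring.
apply: mpowD; first by apply: mpowSM; [apply: residueP | apply: hgK].
exact/mpowZ/hal.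
Qed.

Lemma indep_mod_residue K e (x : nat -> B) :
  (forall s, (s < size e)%N -> mpow m K e`_s) -> indep_mod K e ->
  mpow m K.+1 (\sum_(s < size e) e`_s * x s) ->
  forall s, (s < size e)%N -> residue m (x s) = 0.
Proof.
move=> he hind hx; apply: hind; set c := comb _ _.
have -> : c = \sum_(s < size e) e`_s * x s - \sum_(s < size e) (x s - (residue m (x s))%:A) * e`_s.
  rewrite -sumrB /c /comb; apply: eq_bigr => s _.
  by rewrite mulrBl mulr_algl [x s * _]mulrC; ring.
apply: mpowB hx _; apply: mpow_sum => s _.
by apply: mpowSM; [apply: residueP | apply: he].
Qed.

End BasisModPower.

(** * Splitting generators using bounded type *)

Section BoundedTypeSplit.
Variables (B : comAlgType CC) (m : B -> Prop).
Hypothesis Hdb : deformation_base m.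
Variables (Q : quiver) (R : (qpath Q -> CC) -> Prop) (psi : (qpath Q -> CC) -> qpath Q -> B).
Hypothesis HR : sub_bimodule_CQge1 R.
Hypothesis Hpsi : bimodule_map_to_mCQ m R psi.
Hypothesis HIP : forall z, in_IP m R psi z -> in_mCQhat m z -> mY m (in_IP m R psi) z.
Variable F : seq (qpath Q -> CC).
Hypothesis HF : is_basis R F.
Variables (L H : nat).
Hypothesis HH : forall p q : qpath Q, (plen p <= L)%N -> sim F p q -> (plen q <= H)%N.
Implicit Types (p q w c u : qpath Q) (r : qpath Q -> CC).

Local Notation gterm := (option (qpath Q * (qpath Q -> CC) * qpath Q)).

Definition long_class w : Prop := forall u, sim F w u -> (L < plen u)%N.

Definition long_basis_elt p q i : Prop :=
  forall c w, nth (@fun0 Q) F i c != 0 -> middle p q w = Some c -> long_class w.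

Definition coords r : nat -> CC :=
  epsilon (inhabits (fun _ => 0)) (fun a => r = lincomb F a).

Definition long_part p q r : qpath Q -> CC := lincomb F (fun i =>
  if excluded_middle_informative (long_basis_elt p q i) then coords r i else 0).

Definition short_part p q r : qpath Q -> CC := lincomb F (fun i =>
  if excluded_middle_informative (long_basis_elt p q i) then 0 else coords r i).

Lemma R_lincomb a : R (lincomb F a).
Proof.
rewrite /lincomb; apply: (@closed_fun_sum _ _ R (R0 HR) (RD HR)) => i.
by apply: (RZ HR); case: HF => hF _; apply: hF.
Qed.

Lemma coordsP r : R r -> r = lincomb F (coords r).
Proof. by case: HF => _ [_ /(_ r) h] /h; apply: epsilon_spec. Qed.

Lemma long_short_part p q r : R r -> r = fun w => long_part p q r w + short_part p q r w.
Proof.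
move=> hr; apply: functional_extensionality => w.
rewrite {1}(coordsP hr) /long_part /short_part /lincomb -big_split; apply: eq_bigr => i _ /=.
by case: (excluded_middle_informative (long_basis_elt p q i)); rewrite /= mul0r ?addr0 ?add0r.
Qed.

Lemma long_class_len w : long_class w -> (L < plen w)%N.
Proof. by apply; apply: rst_refl. Qed.

Lemma short_part_eq0 p q r : (H < plen p + plen q)%N -> short_part p q r = @fun0 Q.
Proof.
move=> hpq; apply: functional_extensionality => w; rewrite /short_part /lincomb big1 // => i _.
destruct (excluded_middle_informative (long_basis_elt p q i)) as [hl|hl]; first by rewrite mul0r.
case: hl => c w' _ hm u hs; rewrite ltnNge; apply/negP => /HH /(_ (rst_sym _ _ _ _ hs)).
by apply/negP; rewrite -ltnNge; apply: leq_trans hpq (middle_len hm).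
Qed.

Lemma lincomb_neq0 a c : lincomb F a c != 0 ->
  exists2 i : 'I_(size F), a i != 0 & nth (@fun0 Q) F i c != 0.
Proof.
rewrite /lincomb => /eqP hne; apply: NNPP => hn; apply: hne; apply: big1 => i _.
apply/eqP; rewrite mulf_eq0; apply/negPn/negP; rewrite negb_or => /andP [h1 h2].
by case: hn; exists i.
Qed.

Lemma sandwich_long_part p q r w : sandwich p q (long_part p q r) w != 0 -> long_class w.
Proof.
case/sandwich_neq0 => c [hm]; rewrite /long_part => /lincomb_neq0 [i ha hc].
move: ha; destruct (excluded_middle_informative (long_basis_elt p q i)) as [hl|hl].
  by move=> _; apply: hl hc hm.
by rewrite eqxx.
Qed.

Lemma sandwich_short_part p q r w : sandwich p q (short_part p q r) w != 0 -> ~ long_class w.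
Proof.
case/sandwich_neq0 => c [hm]; rewrite /short_part => /lincomb_neq0 [i ha hc].
move: ha; destruct (excluded_middle_informative (long_basis_elt p q i)) as [hl|hl].
  by rewrite eqxx.
move=> _ hw; apply: hl => c' w' hc' hm' u hs; apply: hw.
apply: rst_trans hs; apply: rst_step.
exists (nat_of_ord i), p, q, c, c'.
by do !split => //; apply: middle_concat.
Qed.

Definition long_term (o : gterm) : gterm :=
  if o is Some (p, r, q) then Some (p, long_part p q r, q) else None.

Definition short_term (o : gterm) : gterm :=
  if o is Some (p, r, q) then Some (p, short_part p q r, q) else None.

Lemma Rterm_long o : Rterm R (long_term o).
Proof. by case: o => [[[p r] q]|] //=; apply: R_lincomb. Qed.

Lemma Rterm_short o : Rterm R (short_term o).
Proof. by case: o => [[[p r] q]|] //=; apply: R_lincomb. Qed.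

Lemma pterm_long_short o w : Rterm R o ->
  pterm psi o w = pterm psi (long_term o) w + pterm psi (short_term o) w.
Proof.
case: o => [[[p r] q]|] /= ho; last by rewrite addr0.
rewrite -sandwichD {1}(long_short_part p q ho) /sandwich.
by case: (middle p q w) => // c; apply: (idpsiD Hpsi); apply: R_lincomb.
Qed.

Lemma pterm_short_eq0 o w :
  (if o is Some (p, _, q) then is_true (H < plen p + plen q)%N else True) ->
  pterm psi (short_term o) w = 0.
Proof.
case: o => [[[p r] q]|] //= hpq; rewrite short_part_eq0 // /sandwich.
by case: (middle p q w) => // c; exact: (idpsi0 HR Hpsi).
Qed.

Lemma residue_long_term o w : ~ long_class w -> residue m (pterm psi (long_term o) w) = 0.
Proof.
move=> hw; rewrite (residue_pterm Hdb Hpsi _ (Rterm_long o)).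
by case: o => [[[p r] q]|] //=; apply/eqP/negPn/negP => /sandwich_long_part.
Qed.

Lemma residue_short_term o w : long_class w -> residue m (pterm psi (short_term o) w) = 0.
Proof.
move=> hw; rewrite (residue_pterm Hdb Hpsi _ (Rterm_short o)).
by case: o => [[[p r] q]|] //=; apply/eqP/negPn/negP => /sandwich_short_part.
Qed.

Lemma Pgen_split W : in_Pgen m R psi W ->
  (forall w, residue m (W w) != 0 -> (plen w <= L)%N) ->
  exists WA WU, [/\ in_IP_CQ m R psi WA, in_BCQ m WA, in_mpowIP m R psi 1 WU &
    forall w, W w = WA w + WU w].
Proof.
move=> /in_PgenP [t [Rt [dt st]]] hres; case: (dt H.+1) => M hM.
have short0 i w : (M <= i)%N -> pterm psi (short_term (t i)) w = 0.
  by move=> /hM; apply: pterm_short_eq0.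
pose WA w := \sum_(i < M) pterm psi (short_term (t i)) w.
pose WU w := W w - WA w.
have stU : sum_to m (fun i => pterm psi (long_term (t i))) WU.
  apply: sum_to_ext (sum_toB st (sum_to_fin m short0)) => i w.
  by rewrite (pterm_long_short w (Rt i)) addrK.
have PU : in_Pgen m R psi WU.
  apply/in_PgenP; exists (fun i => long_term (t i)); split; first by move=> i; apply: Rterm_long.
  split => // N; case: (dt N) => M' hM'; exists M' => i /hM'.
  by case: (t i) => [[[p r] q]|].
have resU w : residue m (WU w) = 0.
  (* long classes carry no short term, and the long terms vanish mod m elsewhere *)
  case: (classic (long_class w)) => hw.
    rewrite /WU (residueB Hdb) /WA (residue_sum Hdb) big1 => [|i _]; last exact: residue_short_term.
    rewrite subr0; apply/eqP/negPn/negP => /hres; rewrite leqNgt.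
    by move/negP; apply; apply: long_class_len.
  case: (converges_residue Hdb (stU w)) => N /(_ N (leqnn N)) <-.
  by rewrite (residue_sum Hdb) big1 // => i _; apply: residue_long_term.
exists WA, WU; split.
- exact: in_IP_CQ_pterm_sum (fun i => Rterm_short _).
- apply: (@in_BCQ_sum _ _ _ _ (index_enum 'I_M) (fun i => pterm psi (short_term (t i)))) => i.
  exact/(in_BCQ_pterm HR Hpsi)/Rterm_short.
- apply: in_mpowIP_of_mY; apply: HIP; first exact: in_IP_of_Pgen.
  by move=> w; apply/(residue_eq0 Hdb).
- by move=> w; rewrite /WU addrC subrK.
Qed.

End BoundedTypeSplit.

(** * The inductive step and the assembled series *)

Definition lsum (B : comAlgType CC) (Q : quiver) (l : seq (B * (qpath Q -> B))) (w : qpath Q) : B :=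
  \sum_(it <- l) it.1 * it.2 w.

Lemma Forall_map_iota (T : Type) (P : T -> Prop) (f : nat -> T) a d :
  (forall s, (a <= s < a + d)%N -> P (f s)) -> List.Forall P [seq f s | s <- iota a d].
Proof.
elim: d a => [|d IH] a h /=; constructor; first by apply: h; rewrite leqnn addnS ltnS leq_addr.
by apply: IH => s /andP [hs hs']; apply: h; rewrite ltnW //= -addSnnS.
Qed.

Section KeyStep.
Variables (B : comAlgType CC) (m : B -> Prop).
Hypothesis Hdb : deformation_base m.
Variables (Q : quiver) (R : (qpath Q -> CC) -> Prop) (psi : (qpath Q -> CC) -> qpath Q -> B).
Hypothesis HR : sub_bimodule_CQge1 R.
Hypothesis Hpsi : bimodule_map_to_mCQ m R psi.
Hypothesis HIP : forall z, in_IP m R psi z -> in_mCQhat m z -> mY m (in_IP m R psi) z.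
Variable F : seq (qpath Q -> CC).
Hypothesis HF : is_basis R F.
Hypothesis Hbd : forall N, exists H, forall p q : qpath Q,
  (plen p <= N)%N -> sim F p q -> (plen q <= H)%N.
Implicit Types (y z : qpath Q -> B).

Lemma in_mpowIP1_of_IP_CQ z : in_IP_CQ m R psi z -> in_mCQhat m z -> in_mpowIP m R psi 1 z.
Proof.
move=> /in_IP_of_IP_CQ /(in_IP_decomp Hdb HR Hpsi) [W [V [hW [hV e]]]] hzm.
have hWm : in_mCQhat m W.
  move=> w; have := mB Hdb (hzm w) ((mpow1 (m_ideal Hdb) _).1 (in_mpowIP_mpow hV w)).
  by rewrite e addrK.
apply: in_mpowIP_ext (in_mpowIPD (in_mpowIP_of_mY (HIP (in_IP_of_Pgen hW) hWm)) hV) => w.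
by rewrite e.
Qed.

Lemma in_mpowIP_basis_lead K y : in_mpowIP m R psi K y ->
  exists (e : seq B) (V : nat -> qpath Q -> B),
    [/\ forall s, (s < size e)%N -> mpow m K e`_s, indep_mod m K e,
        forall s, in_Pgen m R psi (V s) &
        in_mpowIP m R psi K.+1 (fun w => y w - \sum_(s < size e) e`_s * V s w)].
Proof.
case/(in_mpowIP_lead Hdb HR Hpsi) => N [b [W [hbW hrest]]].
case: (basis_mod Hdb K) => e [he hind hsp].
have /choice [cc hcc] : forall j, exists c, mpow m K.+1 (b j - comb e c).
  by move=> j; apply: hsp; case: (hbW j).
pose V s w := \sum_(j < N) (cc j s)%:A * W j w.
exists e, V; split => // [s|].
  apply: in_Pgen_sum => j.
  by apply: (in_PgenZ HR Hpsi); case: (hbW j).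
have hdev : in_mpowIP m R psi K.+1 (fun w => \sum_(j < N) (b j - comb e (cc j)) * W j w).
  apply: in_mpowIP_sum => j.
  rewrite -[K.+1]addn0; apply: in_mpowIPMl (hcc j) _.
  by apply/in_mpowIP_of_IP/in_IP_of_Pgen; case: (hbW j).
apply: in_mpowIP_ext (in_mpowIPD hrest hdev) => w.
have -> : \sum_(s < size e) e`_s * V s w = \sum_(j < N) comb e (cc j) * W j w.
  rewrite /V; under eq_bigr do rewrite mulr_sumr.
  rewrite exchange_big /=; apply: eq_bigr => j _.
  by rewrite /comb mulr_suml; apply: eq_bigr => s _; rewrite mulrCA mulrA mulr_algl.
have -> : \sum_(j < N) (b j - comb e (cc j)) * W j w =
    \sum_(j < N) b j * W j w - \sum_(j < N) comb e (cc j) * W j w.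
  by rewrite -sumrB; apply: eq_bigr => j _; rewrite mulrBl.
by ring.
Qed.

Lemma in_mpowIP_step K y : in_mpowIP m R psi K y -> in_BCQ m y ->
  exists (l : seq (B * (qpath Q -> B))) y',
    [/\ List.Forall (fun it => mpow m K it.1 /\ in_IP_CQ m R psi it.2) l,
        in_mpowIP m R psi K.+1 y', in_BCQ m y' & forall w, y w = lsum l w + y' w].
Proof.
move=> hy hyB; case: (in_mpowIP_basis_lead hy) => e [V [he hind hV hrest]].
case: (hyB K.+1) => S hS; pose L := (\max_(u <- S) plen u)%N.
have hres s w : (s < size e)%N -> residue m (V s w) != 0 -> (plen w <= L)%N.
  move=> hs hr; apply: leq_bigmax_seq => //; apply: hS => hyw; move/eqP: hr; apply.
  apply: (indep_mod_residue Hdb (x := fun s => V s w)) hind _ s hs => //.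
  by have := mpowB hyw (in_mpowIP_mpow hrest w); rewrite opprB addrC subrK.
case: (Hbd L) => H hH.
have /(choice_lt (fun _ => 0, fun _ => 0)) [AU hAU] : forall s, (s < size e)%N ->
    exists AU : (qpath Q -> B) * (qpath Q -> B),
      [/\ in_IP_CQ m R psi AU.1, in_BCQ m AU.1, in_mpowIP m R psi 1 AU.2 &
          forall w, V s w = AU.1 w + AU.2 w].
  move=> s hs; case: (Pgen_split Hdb HR Hpsi HIP HF hH (hV s) (fun w => hres s w hs)).
  by move=> WA [WU hWAU]; exists (WA, WU).
pose l := [seq (e`_s, (AU s).1) | s <- iota 0 (size e)].
have hl w : lsum l w = \sum_(s < size e) e`_s * (AU s).1 w.
  rewrite /lsum big_map.
  have -> : iota 0 (size e) = index_iota 0 (size e) by rewrite /index_iota subn0.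
  by rewrite big_mkord.
exists l, (fun w => y w - lsum l w); split.
- apply: Forall_map_iota => s /andP [_ hs].
  by case: (hAU s hs) => hA _ _ _; split => //; apply: he.
- have hU : in_mpowIP m R psi K.+1 (fun w => \sum_(s < size e) e`_s * (AU s).2 w).
    apply: in_mpowIP_sum => s; rewrite -addn1.
    by case: (hAU s (ltn_ord s)) => _ _ hU _; apply: in_mpowIPMl (he s (ltn_ord s)) hU.
  apply: in_mpowIP_ext (in_mpowIPD hU hrest) => w; rewrite hl.
  have -> : \sum_(s < size e) e`_s * V s w =
      \sum_(s < size e) e`_s * (AU s).1 w + \sum_(s < size e) e`_s * (AU s).2 w.
    rewrite -big_split; apply: eq_bigr => s _.
    by case: (hAU s (ltn_ord s)) => _ _ _ ->; rewrite mulrDr.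
  by ring.
- apply: in_BCQB hyB (in_BCQ_ext (fun w => esym (hl w)) _).
  by apply: in_BCQ_sum => s; apply: in_BCQMl; case: (hAU s (ltn_ord s)).
- by move=> w; rewrite addrC subrK.
Qed.

End KeyStep.

Section BlockSeries.
Variables (B : comAlgType CC) (m : B -> Prop) (Q : quiver).
Variables (Y : (qpath Q -> B) -> Prop) (good : nat -> (qpath Q -> B) -> Prop).
Hypothesis Y0 : Y (fun _ => 0).
Hypothesis good_mpow : forall K y w, good K y -> mpow m K (y w).

Local Notation item := (B * (qpath Q -> B))%type.
Local Notation block K l := (List.Forall (fun it : item => mpow m K it.1 /\ Y it.2) l).

Definition block_spec K (y : qpath Q -> B) (ly : seq item * (qpath Q -> B)) : Prop :=
  [/\ block K ly.1, good K.+1 ly.2 & forall w, y w = lsum ly.1 w + ly.2 w].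

Hypothesis block_step : forall K y, good K y -> exists ly, block_spec K y ly.

Definition next_block K y : seq item * (qpath Q -> B) :=
  epsilon (inhabits ([::], y)) (block_spec K y).

Lemma next_blockP K y : good K y -> block_spec K y (next_block K y).
Proof. by move/block_step; apply: epsilon_spec. Qed.

(* A state [(K, l, y)] holds the pending items [l] of level [K] and the remainder [y]. *)
Definition state := (nat * seq item * (qpath Q -> B))%type.

Definition refill K y : state := ((K, (next_block K y).1), (next_block K y).2).

Definition step (st : state) : state :=
  match st with
  | (K, _ :: l, y) => (K, l, y)
  | (K, [::], y) => refill K.+1 y
  end.

(* An empty pending list emits a zero item: this keeps every step productive. *)
Definition emitted (st : state) : item :=
  if st is (_, it :: _, _) then it else (0, fun _ => 0).

Variable z : qpath Q -> B.
Hypothesis good_z : good 1 z.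

Definition states n : state := iter n step (refill 1 z).
Definition level n : nat := (states n).1.1.

Definition pending n := (states n).1.2.
Definition remainder n := (states n).2.
Definition partial_sum n w := \sum_(i < n) (emitted (states i)).1 * (emitted (states i)).2 w.

Definition state_inv n : Prop :=
  [/\ (1 <= level n)%N, block (level n) (pending n), good (level n).+1 (remainder n) &
      forall w, z w = partial_sum n w + lsum (pending n) w + remainder n w].

Lemma state_inv0 : state_inv 0.
Proof.
have [hl hy e] := next_blockP good_z.
by split => // w; rewrite /partial_sum big_ord0 add0r e.
Qed.

Lemma state_invS n : state_inv n -> state_inv n.+1.
Proof.
have ps w : partial_sum n.+1 w =
    partial_sum n w + (emitted (states n)).1 * (emitted (states n)).2 w.
  by rewrite /partial_sum big_ord_recr.
rewrite /state_inv /level /pending /remainder; move: ps.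
rewrite (_ : states n.+1 = step (states n)) //.
case: (states n) => [[K [|it l]] y] /= ps [hK hl hy e].
  have [hl' hy' e'] := next_blockP hy.
  by split => // w; rewrite ps e e' /lsum big_nil mul0r !addr0 addrA.
case/List.Forall_cons_iff: hl => _ hl; split => // w.
by rewrite ps e /lsum big_cons; ring.
Qed.

Lemma state_invP n : state_inv n.
Proof. by elim: n => [|n /state_invS]; [apply: state_inv0 |]. Qed.

Lemma states_succ n : states n.+1 = step (states n).
Proof. by []. Qed.

Lemma level_mono n d : (level n <= level (n + d))%N.
Proof.
elim: d => [|d IH]; first by rewrite addn0.
apply: leq_trans IH _; rewrite addnS /level states_succ.
by case: (states (n + d)) => [[K [|it l]] y].
Qed.

Lemma level_grows len n : size (pending n) = len -> (level n < level (n + len.+1))%N.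
Proof.
elim: len n => [|len IH] n.
  by rewrite /pending /level addn1 states_succ; case: (states n) => [[K [|it l]] y].
have step_pending : size (pending n) = len.+1 ->
    level n.+1 = level n /\ size (pending n.+1) = len.
  by rewrite /pending /level states_succ; case: (states n) => [[K [|it l]] y] //= [].
by move=> /step_pending [e /IH]; rewrite e addSnnS.
Qed.

Lemma level_tends : tends_infty level.
Proof.
elim=> [|T [M hM]]; first by exists 0%N.
exists (M + (size (pending M)).+1)%N => n hn.
apply: leq_trans (leq_ltn_trans (hM M (leqnn M)) (level_grows (erefl _))) _.
by rewrite -(subnKC hn) level_mono.
Qed.

Lemma lsum_mpow K (l : seq item) w :
  List.Forall (fun it : item => mpow m K it.1 /\ Y it.2) l -> mpow m K (lsum l w).
Proof.
elim: l => [_|it l IH /List.Forall_cons_iff [[h _] hl]]; rewrite /lsum ?big_nil ?big_cons.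
  exact: mpow0.
exact: mpowD (mpowMr _ h) (IH hl).
Qed.

Lemma mY_of_blocks : mY m Y z.
Proof.
exists (fun i => (emitted (states i)).1), level, (fun i => (emitted (states i)).2); split.
  move=> i; case: (state_invP i); rewrite /level /pending /emitted.
  case: (states i) => [[K [|it l]] y] /= hK hl _ _; first by do !split => //; apply: mpow0.
  by case/List.Forall_cons_iff: hl => [[h1 h2] _].
split; first exact: level_tends.
move=> w k; case: (level_tends k) => M hM; exists M => n /hM hk.
case: (state_invP n) => _ hl hy e.
have -> : z w - \sum_(i < n) (emitted (states i)).1 * (emitted (states i)).2 w =
    lsum (pending n) w + remainder n w by rewrite e /partial_sum; ring.
apply: (mpow_le hk); apply: mpowD; first exact: lsum_mpow hl.
by apply: mpow_le (good_mpow w hy).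
Qed.

End BlockSeries.

Theorem proposition6p48
  (Q : quiver) (R : (qpath Q -> CC) -> Prop)
  (B : comAlgType CC) (m : B -> Prop)
  (psi : (qpath Q -> CC) -> (qpath Q -> B)) :
  sub_bimodule_CQge1 R ->
  finite_dimensional R ->
  bounded_type R ->
  deformation_base m ->
  bimodule_map_to_mCQ m R psi ->
  (forall z, in_IP m R psi z -> in_mCQhat m z -> mY m (in_IP m R psi) z) ->
  forall z, in_IP_CQ m R psi z -> in_mCQ m z -> mY m (in_IP_CQ m R psi) z.
Proof.
move=> HR _ [F [HF [_ Hbd]]] Hdb Hpsi HIP z hz [hzB hzm].
apply: (mY_of_blocks (good := fun K y => in_mpowIP m R psi K y /\ in_BCQ m y)).
- exact: in_IP_CQ0.
- by move=> K y w [/in_mpowIP_mpow].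
- move=> K y [hy hyB].
  have [l [y' [hl hy' hyB' e]]] := in_mpowIP_step Hdb HR Hpsi HIP HF Hbd hy hyB.
  by exists (l, y').
- by split => //; apply: in_mpowIP1_of_IP_CQ.
Qed.
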